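(* Let $M$ be the spacetime with metric $ds^2=-b^2(r)dt^2+f_1^2(r)dr^2+f_2^2(r)(d\theta^2+\sin^2\theta\,d\phi^2)$ ($b,f_1,f_2$ smooth and positive), with $u_k$, $\chi_k$ as in the context. Let $\kappa_1,\kappa_2,\kappa_3$ be constants and $$K_{kl}=(\kappa_2f_2^2-2\kappa_3b^2)u_ku_l+(\kappa_1+2\kappa_2f_2^2+\kappa_3b^2)g_{kl}-\kappa_2f_2^2\,\chi_k\chi_l,$$ and let $T_{kl}=(\mu+p_\perp)u_ku_l+p_\perp g_{kl}+(p_r-p_\perp)\chi_k\chi_l$ with functions $\mu(r),p_r(r),p_\perp(r)$, and $P=\tfrac13(p_r+2p_\perp)$. Then the conformal Killing gravity field equations $R_{kl}-\tfrac12Rg_{kl}=T_{kl}+K_{kl}$ are equivalent to the three scalar equations $$\tfrac12R^\star=\mu-3\kappa_3b^2-\kappa_2f_2^2-\kappa_1,\qquad D=\tfrac32P+\tfrac12\mu+2\kappa_2f_2^2+\kappa_1,\qquad \Sigma=(p_r-p_\perp)-\kappa_2f_2^2,$$ where $R^\star$, $D$, $\Sigma$ are the functions of $r$ defined in the context.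
   Context: $u_k$ has components $u_0=-b$, $u_r=u_\theta=u_\phi=0$; $\chi_k$ has components $\chi_r=f_1$ and all others zero. $R_{kl}$ is the Ricci tensor of $g$ and $R$ its trace. Primes denote $d/dr$. Define $D=\dfrac{1}{bf_1^2}\left[b''-b'\left(\dfrac{f_1'}{f_1}-2\dfrac{f_2'}{f_2}\right)\right]$ (this is $\nabla_p\dot u^p$, where $\dot u_k=u^j\nabla_ju_k$), $\Sigma=-\dfrac{1}{bf_1^2}\left[b''-b'\left(\dfrac{f_1'}{f_1}+\dfrac{f_2'}{f_2}\right)\right]-\dfrac{1}{f_1^2}\left[\dfrac{f_1^2}{f_2^2}+\dfrac{f_2''}{f_2}-\left(\dfrac{f_2'}{f_2}\right)^2-\dfrac{f_1'f_2'}{f_1f_2}\right]$, $R^\star=\dfrac{2}{f_2^2}-\dfrac{2}{f_1^2}\left[2\dfrac{f_2''}{f_2}-2\dfrac{f_1'f_2'}{f_1f_2}+\left(\dfrac{f_2'}{f_2}\right)^2\right]$. *)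

From Stdlib Require Import Reals Lra.
From Coquelicot Require Import Coquelicot.
Open Scope R_scope.

(** Points of the coordinate chart: a coordinate map x with
    x 0 = t, x 1 = r, x 2 = theta, x 3 = phi (other entries are irrelevant). *)
Definition pt := nat -> R.

Definition upd (x : pt) (k : nat) (s : R) : pt :=
  fun i => if Nat.eqb i k then s else x i.

Definition pd (k : nat) (f : pt -> R) (x : pt) : R :=
  Derive (fun s => f (upd x k s)) (x k).

Definition sum4 (F : nat -> R) : R := F 0%nat + F 1%nat + F 2%nat + F 3%nat.

Definition tfield := nat -> nat -> pt -> R.

Definition is_inverse_at (g ginv : tfield) (x : pt) : Prop :=
  forall i k, (i < 4)%nat -> (k < 4)%nat ->
    sum4 (fun j => g i j x * ginv j k x) = if Nat.eqb i k then 1 else 0.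

Definition christoffel (g ginv : tfield) (i k l : nat) (x : pt) : R :=
  / 2 * sum4 (fun m => ginv i m x *
     (pd k (g m l) x + pd l (g m k) x - pd m (g k l) x)).

Definition ricci (g ginv : tfield) (k l : nat) (x : pt) : R :=
  sum4 (fun j =>
    pd j (christoffel g ginv j k l) x - pd l (christoffel g ginv j k j) x
    + sum4 (fun m => christoffel g ginv j j m x * christoffel g ginv m k l x
                   - christoffel g ginv j l m x * christoffel g ginv m k j x)).

Definition scal (g ginv : tfield) (x : pt) : R :=
  sum4 (fun k => sum4 (fun l => ginv k l x * ricci g ginv k l x)).

Definition sph_metric (b f1 f2 : R -> R) : tfield :=
  fun k l x =>
    match k, l with
    | 0%nat, 0%nat => - (b (x 1%nat)) ^ 2
    | 1%nat, 1%nat => (f1 (x 1%nat)) ^ 2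
    | 2%nat, 2%nat => (f2 (x 1%nat)) ^ 2
    | 3%nat, 3%nat => (f2 (x 1%nat)) ^ 2 * (sin (x 2%nat)) ^ 2
    | _, _ => 0
    end.

Definition u_cov (b : R -> R) (k : nat) (x : pt) : R :=
  if Nat.eqb k 0 then - b (x 1%nat) else 0.
Definition chi_cov (f1 : R -> R) (k : nat) (x : pt) : R :=
  if Nat.eqb k 1 then f1 (x 1%nat) else 0.

Definition in_chart (U : R -> Prop) (x : pt) : Prop :=
  U (x 1%nat) /\ 0 < x 2%nat < PI.

Definition smooth_on (U : R -> Prop) (f : R -> R) : Prop :=
  forall n x, U x -> ex_derive (Derive_n f n) x.

Definition Ktens (b f1 f2 : R -> R) (k1 k2 k3 : R) (k l : nat) (x : pt) : R :=
  let r := x 1%nat in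
  (k2 * (f2 r) ^ 2 - 2 * k3 * (b r) ^ 2) * u_cov b k x * u_cov b l x
  + (k1 + 2 * k2 * (f2 r) ^ 2 + k3 * (b r) ^ 2) * sph_metric b f1 f2 k l x
  - k2 * (f2 r) ^ 2 * chi_cov f1 k x * chi_cov f1 l x.

Definition Ttens (b f1 f2 mu pr pp : R -> R) (k l : nat) (x : pt) : R :=
  let r := x 1%nat in
  (mu r + pp r) * u_cov b k x * u_cov b l x
  + pp r * sph_metric b f1 f2 k l x
  + (pr r - pp r) * chi_cov f1 k x * chi_cov f1 l x.

Definition ckg_eq (b f1 f2 mu pr pp : R -> R) (k1 k2 k3 : R) (ginv : tfield)
    (k l : nat) (x : pt) : Prop :=
  let g := sph_metric b f1 f2 in
  ricci g ginv k l x - / 2 * scal g ginv x * g k l x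
  = Ttens b f1 f2 mu pr pp k l x + Ktens b f1 f2 k1 k2 k3 k l x.

Definition d1 (f : R -> R) (r : R) : R := Derive f r.
Definition d2 (f : R -> R) (r : R) : R := Derive (Derive f) r.

Definition Dfun (b f1 f2 : R -> R) (r : R) : R :=
  / (b r * (f1 r) ^ 2) *
  (d2 b r - d1 b r * (d1 f1 r / f1 r - 2 * (d1 f2 r / f2 r))).

Definition Sigmafun (b f1 f2 : R -> R) (r : R) : R :=
  - (/ (b r * (f1 r) ^ 2) *
     (d2 b r - d1 b r * (d1 f1 r / f1 r + d1 f2 r / f2 r)))
  - / (f1 r) ^ 2 *
     ((f1 r) ^ 2 / (f2 r) ^ 2 + d2 f2 r / f2 r - (d1 f2 r / f2 r) ^ 2
      - d1 f1 r * d1 f2 r / (f1 r * f2 r)).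

Definition Rstar (f1 f2 : R -> R) (r : R) : R :=
  2 / (f2 r) ^ 2
  - 2 / (f1 r) ^ 2 *
     (2 * (d2 f2 r / f2 r) - 2 * (d1 f1 r * d1 f2 r / (f1 r * f2 r))
      + (d1 f2 r / f2 r) ^ 2).

From Pilot Require Import Defs.
From Stdlib Require Import Reals Lra Lia.
From Coquelicot Require Import Coquelicot.
Open Scope R_scope.

(* The metric is diagonal, so its inverse is the diagonal of reciprocals and
   Gamma^i_{kl} = (d_k g_il + d_l g_ik - d_i g_kl) / (2 g_ii).  The nonzero
   Christoffel symbols and their first derivatives are then explicit rational
   expressions in b, f1, f2, their first two derivatives, sin theta and
   cos theta, and so is the Ricci tensor.  It is diagonal with R^3_3 = R^2_2,
   and in terms of the mixed components E_k = R^k_k one finds D = -E_0,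
   Sigma = E_1 - E_2 and R* = E_1 + 2 E_2 - E_0.  Dividing the (k,k) field
   equation by g_kk turns the field equations into the linear system
   E_k - (E_0 + E_1 + E_2 + E_3) / 2 = (T + K)^k_k, which is equivalent to the
   three scalar equations. *)

Lemma sum4_ext (F G : nat -> R) :
  (forall k, (k < 4)%nat -> F k = G k) -> sum4 F = sum4 G.
Proof. intros H; unfold sum4; rewrite !H by lia; reflexivity. Qed.

Lemma sum4_single (F : nat -> R) (i : nat) :
  (i < 4)%nat -> (forall j, (j < 4)%nat -> j <> i -> F j = 0) -> sum4 F = F i.
Proof.
  intros Hi H0; unfold sum4.
  destruct i as [|[|[|[|i]]]]; [| | | | lia].
  - rewrite (H0 1%nat), (H0 2%nat), (H0 3%nat) by lia; ring.
  - rewrite (H0 0%nat), (H0 2%nat), (H0 3%nat) by lia; ring.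
  - rewrite (H0 0%nat), (H0 1%nat), (H0 3%nat) by lia; ring.
  - rewrite (H0 0%nat), (H0 1%nat), (H0 2%nat) by lia; ring.
Qed.

Lemma forall_lt4_diag (P : nat -> nat -> Prop) :
  (forall k l, (k < 4)%nat -> (l < 4)%nat -> k <> l -> P k l) ->
  ((forall k l, (k < 4)%nat -> (l < 4)%nat -> P k l) <->
   P 0%nat 0%nat /\ P 1%nat 1%nat /\ P 2%nat 2%nat /\ P 3%nat 3%nat).
Proof.
  intros Hoff; split.
  - intros H; repeat split; apply H; lia.
  - intros (H0 & H1 & H2 & H3) k l Hk Hl.
    destruct (Nat.eq_dec k l) as [<-|Hkl]; [|now apply Hoff].
    destruct k as [|[|[|[|k]]]]; [assumption.. | lia].
Qed.

Lemma Rminus_mult_eq_iff (a s t c : R) :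
  c <> 0 -> (a - s * c = t * c <-> a / c - s = t).
Proof.
  intros Hc; split; intros H.
  - apply (Rmult_eq_reg_r c); [|exact Hc].
    rewrite <- H; field; exact Hc.
  - rewrite <- H; field; exact Hc.
Qed.

Lemma mixed_einstein_iff (E0 E1 E2 E3 t0 t1 t2 t3 Dv Sg Rs : R) :
  E3 = E2 -> t3 = t2 -> E0 = - Dv -> E1 - E2 = Sg -> E1 + 2 * E2 - E0 = Rs ->
  let S := E0 + E1 + E2 + E3 in
  (E0 - / 2 * S = t0 /\ E1 - / 2 * S = t1 /\ E2 - / 2 * S = t2 /\ E3 - / 2 * S = t3) <->
  (/ 2 * Rs = - t0 /\ Dv = / 2 * (t1 + 2 * t2 - t0) /\ Sg = t1 - t2).
Proof.
  intros -> -> HD HSg HRs S; unfold S; split.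
  - intros (H0 & H1 & H2 & _); repeat split; lra.
  - intros (H0 & H1 & H2); repeat split; lra.
Qed.

Lemma pd_ext_loc (f h : pt -> R) (k : nat) (x : pt) :
  locally (x k) (fun s => f (upd x k s) = h (upd x k s)) -> pd k f x = pd k h x.
Proof. intros H; unfold pd; apply Derive_ext_loc, H. Qed.

Definition diagonal_at (g : tfield) (x : pt) : Prop :=
  forall k l, (k < 4)%nat -> (l < 4)%nat -> k <> l -> g k l x = 0.

Section DiagonalMetric.

Variables (g ginv : tfield) (x : pt).
Hypothesis g_diag : diagonal_at g x.
Hypothesis g_diag_neq0 : forall k, (k < 4)%nat -> g k k x <> 0.
Hypothesis ginv_inv : is_inverse_at g ginv x.

Lemma inverse_diagonal (i k : nat) :
  (i < 4)%nat -> (k < 4)%nat ->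
  ginv i k x = if Nat.eqb i k then / g i i x else 0.
Proof.
  intros Hi Hk.
  assert (Hrow : g i i x * ginv i k x = if Nat.eqb i k then 1 else 0).
  { rewrite <- (ginv_inv i k Hi Hk).
    symmetry; apply (sum4_single (fun j => g i j x * ginv j k x)); [exact Hi|].
    intros j Hj Hji; rewrite (g_diag i j) by auto; ring. }
  apply (Rmult_eq_reg_l (g i i x)); [|now apply g_diag_neq0].
  rewrite Hrow; destruct (Nat.eqb i k); [field; now apply g_diag_neq0 | ring].
Qed.

Lemma christoffel_diagonal (i k l : nat) :
  (i < 4)%nat ->
  christoffel g ginv i k l x =
  (pd k (g i l) x + pd l (g i k) x - pd i (g k l) x) / (2 * g i i x).
Proof.
  intros Hi; unfold christoffel.
  rewrite (sum4_single _ i Hi).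
  - rewrite inverse_diagonal, Nat.eqb_refl by exact Hi.
    field; now apply g_diag_neq0.
  - intros m Hm Hmi.
    rewrite inverse_diagonal by assumption.
    apply Nat.eqb_neq in Hmi; rewrite Nat.eqb_sym, Hmi; ring.
Qed.

Lemma scal_diagonal :
  Defs.scal g ginv x = sum4 (fun k => ricci g ginv k k x / g k k x).
Proof.
  unfold Defs.scal; apply sum4_ext; intros k Hk.
  rewrite (sum4_single _ k Hk).
  - rewrite inverse_diagonal, Nat.eqb_refl by exact Hk.
    unfold Rdiv; ring.
  - intros l Hl Hlk.
    rewrite inverse_diagonal by assumption.
    apply Nat.eqb_neq in Hlk; rewrite Nat.eqb_sym, Hlk; ring.
Qed.

End DiagonalMetric.

Definition regular_at (b f1 f2 : R -> R) (r : R) : Prop :=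
  0 < b r /\ 0 < f1 r /\ 0 < f2 r /\
  ex_derive b r /\ ex_derive f1 r /\ ex_derive f2 r /\
  ex_derive (Derive b) r /\ ex_derive (Derive f1) r /\ ex_derive (Derive f2) r.

Lemma regular_at_smooth (U : R -> Prop) (b f1 f2 : R -> R) (r : R) :
  smooth_on U b -> smooth_on U f1 -> smooth_on U f2 ->
  0 < b r /\ 0 < f1 r /\ 0 < f2 r -> U r -> regular_at b f1 f2 r.
Proof.
  intros Hb Hf1 Hf2 (Hb0 & Hf10 & Hf20) Hr.
  repeat split; try assumption;
    [apply (Hb 0%nat) | apply (Hf1 0%nat) | apply (Hf2 0%nat)
    | apply (Hb 1%nat) | apply (Hf1 1%nat) | apply (Hf2 1%nat)]; exact Hr.
Qed.

Lemma sin_neq0_chart (y : pt) : 0 < y 2%nat < PI -> sin (y 2%nat) <> 0.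
Proof. intros Hth; apply Rgt_not_eq, sin_gt_0; apply Hth. Qed.

Lemma in_chart_locally (U : R -> Prop) (x : pt) (j : nat) :
  open U -> in_chart U x -> locally (x j) (fun s => in_chart U (upd x j s)).
Proof.
  intros HU [Hr Hth].
  destruct j as [|[|[|j]]]; unfold in_chart, upd; simpl.
  - apply filter_forall; auto.
  - apply (filter_imp U); [auto | exact (HU _ Hr)].
  - apply (filter_imp (fun u => 0 < u /\ u < PI)); [auto |].
    exact (open_and _ _ (open_gt 0) (open_lt PI) _ Hth).
  - apply filter_forall; auto.
Qed.

Ltac solve_neq0 :=
  repeat match goal with
  | |- _ /\ _ => split
  | |- _ * _ <> 0 => apply Rmult_integral_contrapositive_currified
  | |- - _ <> 0 => apply Ropp_neq_0_compat
  | |- _ ^ _ <> 0 => apply pow_nonzero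
  end; first [assumption | lra].

(* auto_derive returns eta-expanded profiles, which ring would treat as new atoms. *)
Ltac fold_eta b f1 f2 :=
  try change (fun x : R => b x) with b;
  try change (fun x : R => f1 x) with f1;
  try change (fun x : R => f2 x) with f2;
  try change (fun x : R => Derive b x) with (Derive b);
  try change (fun x : R => Derive f1 x) with (Derive f1);
  try change (fun x : R => Derive f2 x) with (Derive f2).

Section SphericalMetric.

Variables b f1 f2 : R -> R.

Local Notation g := (sph_metric b f1 f2).

Lemma sph_metric_diagonal (y : pt) : diagonal_at g y.
Proof.
  intros k l Hk Hl Hkl.
  destruct k as [|[|[|[|k]]]]; try lia; destruct l as [|[|[|[|l]]]]; try lia;
    reflexivity || congruence.
Qed.

Lemma sph_metric_diag_neq0 (y : pt) (k : nat) :
  regular_at b f1 f2 (y 1%nat) -> 0 < y 2%nat < PI -> (k < 4)%nat ->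
  g k k y <> 0.
Proof.
  intros (Hb & Hf1 & Hf2 & _) Hth Hk.
  pose proof (sin_neq0_chart y Hth).
  destruct k as [|[|[|[|k]]]]; try lia; simpl; solve_neq0.
Qed.

Definition sph_metric_pd (k m l : nat) (y : pt) : R :=
  let r := y 1%nat in let th := y 2%nat in
  match k, m, l with
  | 1%nat, 0%nat, 0%nat => - (2 * b r * Derive b r)
  | 1%nat, 1%nat, 1%nat => 2 * f1 r * Derive f1 r
  | 1%nat, 2%nat, 2%nat => 2 * f2 r * Derive f2 r
  | 1%nat, 3%nat, 3%nat => 2 * f2 r * Derive f2 r * sin th ^ 2
  | 2%nat, 3%nat, 3%nat => f2 r ^ 2 * (2 * sin th * cos th)
  | _, _, _ => 0
  end.

Lemma pd_sph_metric (y : pt) (k m l : nat) :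
  regular_at b f1 f2 (y 1%nat) -> (k < 4)%nat ->
  pd k (g m l) y = sph_metric_pd k m l y.
Proof.
  intros (_ & _ & _ & Db & Df1 & Df2 & _) Hk.
  unfold pd, sph_metric, upd, sph_metric_pd.
  destruct k as [|[|[|[|k]]]]; [| | | | lia]; simpl;
  try (rewrite Derive_const; reflexivity);
  destruct m as [|[|[|[|m]]]]; destruct l as [|[|[|[|l]]]]; simpl;
  try (rewrite Derive_const; reflexivity);
  (apply is_derive_unique; auto_derive;
   [ repeat split; assumption | fold_eta b f1 f2; ring ]).
Qed.

Definition sph_christoffel (i k l : nat) (y : pt) : R :=
  let r := y 1%nat in let th := y 2%nat in
  match i, k, l with
  | 0%nat, 0%nat, 1%nat | 0%nat, 1%nat, 0%nat => Derive b r / b r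
  | 1%nat, 0%nat, 0%nat => b r * Derive b r / f1 r ^ 2
  | 1%nat, 1%nat, 1%nat => Derive f1 r / f1 r
  | 1%nat, 2%nat, 2%nat => - (f2 r * Derive f2 r) / f1 r ^ 2
  | 1%nat, 3%nat, 3%nat => - (f2 r * Derive f2 r * sin th ^ 2) / f1 r ^ 2
  | 2%nat, 1%nat, 2%nat | 2%nat, 2%nat, 1%nat => Derive f2 r / f2 r
  | 2%nat, 3%nat, 3%nat => - (sin th * cos th)
  | 3%nat, 1%nat, 3%nat | 3%nat, 3%nat, 1%nat => Derive f2 r / f2 r
  | 3%nat, 2%nat, 3%nat | 3%nat, 3%nat, 2%nat => cos th / sin th
  | _, _, _ => 0
  end.

Lemma christoffel_sph (ginv : tfield) (y : pt) (i k l : nat) :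
  regular_at b f1 f2 (y 1%nat) -> 0 < y 2%nat < PI ->
  is_inverse_at g ginv y ->
  (i < 4)%nat -> (k < 4)%nat -> (l < 4)%nat ->
  christoffel g ginv i k l y = sph_christoffel i k l y.
Proof.
  intros Hy Hth Hinv Hi Hk Hl.
  rewrite christoffel_diagonal; trivial;
    [| apply sph_metric_diagonal | intros; now apply sph_metric_diag_neq0].
  rewrite !pd_sph_metric by assumption.
  pose proof (sin_neq0_chart y Hth).
  destruct Hy as (Hb & Hf1 & Hf2 & _).
  unfold sph_metric_pd, sph_christoffel, sph_metric.
  destruct i as [|[|[|[|i]]]]; try lia;
  destruct k as [|[|[|[|k]]]]; try lia;
  destruct l as [|[|[|[|l]]]]; try lia; simpl; field; solve_neq0.
Qed.

Definition sph_christoffel_pd (j i k l : nat) (y : pt) : R :=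
  let r := y 1%nat in let th := y 2%nat in
  let B0 := b r in let B1 := Derive b r in let B2 := Derive (Derive b) r in
  let P0 := f1 r in let P1 := Derive f1 r in let P2 := Derive (Derive f1) r in
  let Q0 := f2 r in let Q1 := Derive f2 r in let Q2 := Derive (Derive f2) r in
  let s := sin th in let c := cos th in
  match j, i, k, l with
  | 1%nat, 0%nat, 0%nat, 1%nat | 1%nat, 0%nat, 1%nat, 0%nat =>
      (B2 * B0 - B1 ^ 2) / B0 ^ 2
  | 1%nat, 1%nat, 0%nat, 0%nat =>
      ((B1 ^ 2 + B0 * B2) * P0 ^ 2 - B0 * B1 * (2 * P0 * P1)) / P0 ^ 4
  | 1%nat, 1%nat, 1%nat, 1%nat => (P2 * P0 - P1 ^ 2) / P0 ^ 2
  | 1%nat, 1%nat, 2%nat, 2%nat =>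
      - (((Q1 ^ 2 + Q0 * Q2) * P0 ^ 2 - Q0 * Q1 * (2 * P0 * P1)) / P0 ^ 4)
  | 1%nat, 1%nat, 3%nat, 3%nat =>
      - (((Q1 ^ 2 + Q0 * Q2) * P0 ^ 2 - Q0 * Q1 * (2 * P0 * P1)) / P0 ^ 4) * s ^ 2
  | 1%nat, 2%nat, 1%nat, 2%nat | 1%nat, 2%nat, 2%nat, 1%nat
  | 1%nat, 3%nat, 1%nat, 3%nat | 1%nat, 3%nat, 3%nat, 1%nat =>
      (Q2 * Q0 - Q1 ^ 2) / Q0 ^ 2
  | 2%nat, 1%nat, 3%nat, 3%nat => - (Q0 * Q1 * (2 * s * c)) / P0 ^ 2
  | 2%nat, 2%nat, 3%nat, 3%nat => s ^ 2 - c ^ 2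
  | 2%nat, 3%nat, 2%nat, 3%nat | 2%nat, 3%nat, 3%nat, 2%nat => - (s ^ 2 + c ^ 2) / s ^ 2
  | _, _, _, _ => 0
  end.

Lemma pd_sph_christoffel (y : pt) (j i k l : nat) :
  regular_at b f1 f2 (y 1%nat) -> 0 < y 2%nat < PI ->
  (j < 4)%nat -> (i < 4)%nat -> (k < 4)%nat -> (l < 4)%nat ->
  pd j (sph_christoffel i k l) y = sph_christoffel_pd j i k l y.
Proof.
  intros Hy Hth Hj Hi Hk Hl.
  pose proof (sin_neq0_chart y Hth).
  destruct Hy as (Hb & Hf1 & Hf2 & Db & Df1 & Df2 & DDb & DDf1 & DDf2).
  unfold pd, sph_christoffel, sph_christoffel_pd, upd.
  destruct j as [|[|[|[|j]]]]; try lia;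
  destruct i as [|[|[|[|i]]]]; try lia;
  destruct k as [|[|[|[|k]]]]; try lia;
  destruct l as [|[|[|[|l]]]]; try lia; simpl;
  try (rewrite Derive_const; reflexivity);
  (apply is_derive_unique; auto_derive;
   [ repeat split; first [assumption | solve_neq0] | fold_eta b f1 f2; field; solve_neq0 ]).
Qed.

Definition sph_ricci (k l : nat) (y : pt) : R :=
  sum4 (fun j =>
    sph_christoffel_pd j j k l y - sph_christoffel_pd l j k j y
    + sum4 (fun m => sph_christoffel j j m y * sph_christoffel m k l y
                   - sph_christoffel j l m y * sph_christoffel m k j y)).

Definition sph_ricci_mixed (k : nat) (y : pt) : R := sph_ricci k k y / g k k y.

Ltac sph_ricci_field y :=
  let Hs := fresh in
  match goal with H : 0 < y 2%nat < PI |- _ => pose proof (sin_neq0_chart y H) as Hs end;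
  match goal with H : regular_at _ _ _ _ |- _ => destruct H as (? & ? & ? & _) end;
  unfold sph_ricci_mixed, sph_ricci, sum4, sph_christoffel_pd, sph_christoffel,
    sph_metric, Dfun, Sigmafun, Rstar, Defs.d1, Defs.d2; simpl;
  field; solve_neq0.

Lemma sph_ricci_offdiag (y : pt) (k l : nat) :
  regular_at b f1 f2 (y 1%nat) -> 0 < y 2%nat < PI ->
  (k < 4)%nat -> (l < 4)%nat -> k <> l -> sph_ricci k l y = 0.
Proof.
  intros Hy Hth Hk Hl Hkl.
  destruct k as [|[|[|[|k]]]]; try lia; destruct l as [|[|[|[|l]]]]; try lia;
    try congruence; sph_ricci_field y.
Qed.

Section MixedComponents.

Variable y : pt.
Hypothesis regular_y : regular_at b f1 f2 (y 1%nat).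
Hypothesis theta_y : 0 < y 2%nat < PI.

Lemma sph_ricci_mixed_3 : sph_ricci_mixed 3 y = sph_ricci_mixed 2 y.
Proof. sph_ricci_field y. Qed.

Lemma sph_ricci_mixed_0 : sph_ricci_mixed 0 y = - Dfun b f1 f2 (y 1%nat).
Proof. sph_ricci_field y. Qed.

Lemma sph_ricci_mixed_Sigma :
  sph_ricci_mixed 1 y - sph_ricci_mixed 2 y = Sigmafun b f1 f2 (y 1%nat).
Proof. sph_ricci_field y. Qed.

Lemma sph_ricci_mixed_Rstar :
  sph_ricci_mixed 1 y + 2 * sph_ricci_mixed 2 y - sph_ricci_mixed 0 y =
  Rstar f1 f2 (y 1%nat).
Proof. sph_ricci_field y. Qed.

End MixedComponents.

Definition source_mixed (mu pr pp : R -> R) (k1 k2 k3 : R) (k : nat) (r : R) : R :=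
  match k with
  | 0%nat => - mu r + k2 * f2 r ^ 2 + 3 * k3 * b r ^ 2 + k1
  | 1%nat => pr r + k1 + k2 * f2 r ^ 2 + k3 * b r ^ 2
  | _ => pp r + k1 + 2 * k2 * f2 r ^ 2 + k3 * b r ^ 2
  end.

Lemma Ttens_Ktens_diag (mu pr pp : R -> R) (k1 k2 k3 : R) (y : pt) (k : nat) :
  (k < 4)%nat ->
  Ttens b f1 f2 mu pr pp k k y + Ktens b f1 f2 k1 k2 k3 k k y =
  source_mixed mu pr pp k1 k2 k3 k (y 1%nat) * g k k y.
Proof.
  intros Hk; unfold Ttens, Ktens, source_mixed, u_cov, chi_cov, sph_metric.
  destruct k as [|[|[|[|k]]]]; try lia; simpl; ring.
Qed.

Lemma Ttens_Ktens_offdiag (mu pr pp : R -> R) (k1 k2 k3 : R) (y : pt) (k l : nat) :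
  (k < 4)%nat -> (l < 4)%nat -> k <> l ->
  Ttens b f1 f2 mu pr pp k l y + Ktens b f1 f2 k1 k2 k3 k l y = 0.
Proof.
  intros Hk Hl Hkl; unfold Ttens, Ktens, u_cov, chi_cov, sph_metric.
  destruct k as [|[|[|[|k]]]]; try lia; destruct l as [|[|[|[|l]]]]; try lia;
    try congruence; simpl; ring.
Qed.

Section Chart.

Variables (U : R -> Prop) (ginv : tfield).
Hypothesis U_open : open U.
Hypothesis regular_U : forall r, U r -> regular_at b f1 f2 r.
Hypothesis ginv_inv : forall y, in_chart U y -> is_inverse_at g ginv y.

Lemma pd_christoffel_sph (x : pt) (j i k l : nat) :
  in_chart U x ->
  (j < 4)%nat -> (i < 4)%nat -> (k < 4)%nat -> (l < 4)%nat ->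
  pd j (christoffel g ginv i k l) x = sph_christoffel_pd j i k l x.
Proof.
  intros Hx Hj Hi Hk Hl.
  assert (Hy : regular_at b f1 f2 (x 1%nat)) by apply regular_U, Hx.
  rewrite <- pd_sph_christoffel by (assumption || apply Hx).
  apply pd_ext_loc.
  apply (filter_imp (fun s => in_chart U (upd x j s))); [|now apply in_chart_locally].
  intros s Hs; apply christoffel_sph; auto; [apply regular_U|]; apply Hs.
Qed.

Lemma ricci_sph (x : pt) (k l : nat) :
  in_chart U x -> (k < 4)%nat -> (l < 4)%nat ->
  ricci g ginv k l x = sph_ricci k l x.
Proof.
  intros Hx Hk Hl.
  assert (Hy : regular_at b f1 f2 (x 1%nat)) by apply regular_U, Hx.
  assert (Hth : 0 < x 2%nat < PI) by apply Hx.
  assert (Hi : is_inverse_at g ginv x) by auto.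
  unfold ricci, sph_ricci, sum4.
  repeat rewrite pd_christoffel_sph by (auto; lia).
  repeat rewrite (christoffel_sph ginv x) by (auto; lia).
  reflexivity.
Qed.

Lemma scal_sph (x : pt) :
  in_chart U x -> Defs.scal g ginv x = sum4 (fun k => sph_ricci_mixed k x).
Proof.
  intros Hx.
  rewrite scal_diagonal;
    [| apply sph_metric_diagonal
     | intros; apply sph_metric_diag_neq0; auto; [apply regular_U|]; apply Hx
     | auto].
  apply sum4_ext; intros k Hk.
  unfold sph_ricci_mixed; rewrite ricci_sph by assumption; reflexivity.
Qed.

Variables (mu pr pp : R -> R) (k1 k2 k3 : R).

Lemma ckg_eq_offdiag (x : pt) (k l : nat) :
  in_chart U x -> (k < 4)%nat -> (l < 4)%nat -> k <> l ->
  ckg_eq b f1 f2 mu pr pp k1 k2 k3 ginv k l x.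
Proof.
  intros Hx Hk Hl Hkl; unfold ckg_eq; cbv zeta.
  rewrite ricci_sph, sph_metric_diagonal, Ttens_Ktens_offdiag, sph_ricci_offdiag;
    trivial; [ring | apply regular_U |]; apply Hx.
Qed.

Lemma ckg_eq_diag_iff (x : pt) (k : nat) :
  in_chart U x -> (k < 4)%nat ->
  (ckg_eq b f1 f2 mu pr pp k1 k2 k3 ginv k k x <->
   sph_ricci_mixed k x
   - / 2 * (sph_ricci_mixed 0 x + sph_ricci_mixed 1 x
            + sph_ricci_mixed 2 x + sph_ricci_mixed 3 x)
   = source_mixed mu pr pp k1 k2 k3 k (x 1%nat)).
Proof.
  intros Hx Hk.
  assert (Hg : g k k x <> 0)
    by (apply sph_metric_diag_neq0; [apply regular_U, Hx | apply Hx | exact Hk]).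
  unfold ckg_eq; cbv zeta.
  rewrite ricci_sph, scal_sph, Ttens_Ktens_diag by assumption.
  now apply Rminus_mult_eq_iff.
Qed.

End Chart.

End SphericalMetric.

Theorem proposition3 (U : R -> Prop) (b f1 f2 mu pr pp : R -> R)
    (k1 k2 k3 : R) (ginv : tfield) :
  open U ->
  smooth_on U b -> smooth_on U f1 -> smooth_on U f2 ->
  (forall r, U r -> 0 < b r /\ 0 < f1 r /\ 0 < f2 r) ->
  (forall x, in_chart U x -> is_inverse_at (sph_metric b f1 f2) ginv x) ->
  forall x : pt, in_chart U x ->
  let r := x 1%nat in
  let P := / 3 * (pr r + 2 * pp r) in
  ((forall k l, (k < 4)%nat -> (l < 4)%nat ->
      ckg_eq b f1 f2 mu pr pp k1 k2 k3 ginv k l x)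
   <->
   (/ 2 * Rstar f1 f2 r = mu r - 3 * k3 * (b r) ^ 2 - k2 * (f2 r) ^ 2 - k1 /\
    Dfun b f1 f2 r = 3 / 2 * P + / 2 * mu r + 2 * k2 * (f2 r) ^ 2 + k1 /\
    Sigmafun b f1 f2 r = (pr r - pp r) - k2 * (f2 r) ^ 2)).
Proof.
  intros HU Hb Hf1 Hf2 Hpos Hinv x Hx; cbv zeta.
  assert (Hreg : forall r, U r -> regular_at b f1 f2 r)
    by (intros r Hr; apply (regular_at_smooth U); auto).
  assert (Hy : regular_at b f1 f2 (x 1%nat)) by apply Hreg, Hx.
  assert (Hth : 0 < x 2%nat < PI) by apply Hx.
  rewrite forall_lt4_diag by (intros; now apply (ckg_eq_offdiag _ _ _ U)).
  rewrite !(ckg_eq_diag_iff _ _ _ U) by (auto; lia).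
  rewrite mixed_einstein_iff;
    [| apply sph_ricci_mixed_3 | reflexivity | apply sph_ricci_mixed_0
     | apply sph_ricci_mixed_Sigma | apply sph_ricci_mixed_Rstar];
    trivial.
  unfold source_mixed; split; intros (H0 & H1 & H2); repeat split; lra.
Qed.
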